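(* Let $(X,\rho)$ be a complete metric space, $\varphi\in C(\mathbb T,X)$ positively Lagrange stable, and $\tau\in\mathbb T$, $\tau>0$. Then $\varphi$ is $S$-asymptotically $\tau$-periodic, i.e. $\lim_{t\to+\infty}\rho(\varphi(t+\tau),\varphi(t))=0$, if and only if every $\psi\in\omega_\varphi$ is $\tau$-periodic ($\psi(t+\tau)=\psi(t)$ for all $t\in\mathbb T$).
   Context: $\mathbb T\in\{\mathbb R,\mathbb Z,\mathbb R_+,\mathbb Z_+\}$. $C(\mathbb T,X)$ carries the compact-open topology (metric $d(\varphi,\psi)=\sup_{L>0}\min\{\max_{|t|\le L}\rho(\varphi(t),\psi(t)),L^{-1}\}$), with shifts $\varphi^h(t)=\varphi(t+h)$. $\varphi$ is positively Lagrange stable if $\{\varphi^h:h\in\mathbb T,h\ge0\}$ is precompact in $C(\mathbb T,X)$. $\omega_\varphi$ is the set of limits in $C(\mathbb T,X)$ of $\varphi^{h_n}$ with $h_n\in\mathbb T$, $h_n\to+\infty$. *)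

From Stdlib Require Import Reals Lra.
Open Scope R_scope.

(* The time axis T in {R, Z, R_+, Z_+}, realised as a subset of R. *)
Inductive TimeAxis := TR | TZ | TRp | TZp.

Definition inT (k : TimeAxis) (t : R) : Prop :=
  match k with
  | TR => True
  | TZ => exists z : Z, t = IZR z
  | TRp => 0 <= t
  | TZp => exists n : nat, t = INR n
  end.

Definition is_metric {X : Type} (rho : X -> X -> R) : Prop :=
  (forall x y, 0 <= rho x y) /\
  (forall x y, rho x y = 0 <-> x = y) /\
  (forall x y, rho x y = rho y x) /\
  (forall x y z, rho x z <= rho x y + rho y z).

Definition metric_complete {X : Type} (rho : X -> X -> R) : Prop :=
  forall u : nat -> X,
    (forall eps, 0 < eps -> exists N, forall m n, (N <= m)%nat -> (N <= n)%nat ->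
        rho (u m) (u n) < eps) ->
    exists x, forall eps, 0 < eps -> exists N, forall n, (N <= n)%nat -> rho (u n) x < eps.

(* phi : T -> X (values off T are irrelevant) is continuous on T, i.e. phi in C(T,X). *)
Definition contT {X : Type} (k : TimeAxis) (rho : X -> X -> R) (f : R -> X) : Prop :=
  forall t, inT k t -> forall eps, 0 < eps -> exists delta, 0 < delta /\
    forall s, inT k s -> Rabs (s - t) < delta -> rho (f s) (f t) < eps.

(* Convergence in C(T,X) for the metric
   d(f,g) = sup_{L>0} min{ max_{|t|<=L} rho(f t, g t), 1/L },
   i.e. uniform convergence on every compact [-L,L] of T. *)
Definition convT {X : Type} (k : TimeAxis) (rho : X -> X -> R)
  (f : nat -> R -> X) (g : R -> X) : Prop :=
  forall L, 0 < L -> forall eps, 0 < eps -> exists N, forall n, (N <= n)%nat ->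
    forall t, inT k t -> Rabs t <= L -> rho (f n t) (g t) < eps.

Definition shift {X : Type} (f : R -> X) (h : R) : R -> X := fun t => f (t + h).

(* Positive Lagrange stability: {phi^h : h in T, h >= 0} is precompact in
   C(T,X), i.e. (metric space) every sequence in it has a subsequence
   converging in C(T,X). *)
Definition pos_Lagrange_stable {X : Type} (k : TimeAxis) (rho : X -> X -> R)
  (phi : R -> X) : Prop :=
  forall h : nat -> R, (forall n, inT k (h n) /\ 0 <= h n) ->
    exists sigma : nat -> nat, (forall n, (sigma n < sigma (S n))%nat) /\
    exists psi : R -> X, contT k rho psi /\
      convT k rho (fun n => shift phi (h (sigma n))) psi.

Definition omega_limit {X : Type} (k : TimeAxis) (rho : X -> X -> R)
  (phi psi : R -> X) : Prop :=
  contT k rho psi /\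
  exists h : nat -> R, (forall n, inT k (h n)) /\
    (forall M, exists N, forall n, (N <= n)%nat -> M < h n) /\
    convT k rho (fun n => shift phi (h n)) psi.

Definition S_asympt_periodic {X : Type} (k : TimeAxis) (rho : X -> X -> R)
  (phi : R -> X) (tau : R) : Prop :=
  forall eps, 0 < eps -> exists M, forall t, inT k t -> M < t ->
    rho (phi (t + tau)) (phi t) < eps.

Definition periodicT {X : Type} (k : TimeAxis) (psi : R -> X) (tau : R) : Prop :=
  forall t, inT k t -> psi (t + tau) = psi t.

(* A limit psi of shifts phi^(h_n), h_n -> +oo, sees the differences
   rho(phi(t + h_n + tau), phi(t + h_n)) in the limit as rho(psi(t + tau), psi t):
   if these differences vanish at infinity, every such psi is tau-periodic.
   Conversely, if they stay above some eps along t_n -> +oo, Lagrange stability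
   extracts a limit psi of phi^(t_n) from a subsequence, and comparing psi at
   0 and tau shows that psi is not tau-periodic. *)

From Stdlib Require Import Reals.
From Stdlib Require Import Lra Lia Classical ClassicalEpsilon.
Open Scope R_scope.

Lemma inT_0 k : inT k 0.
Proof.
  destruct k; simpl; auto with real.
  - now exists 0%Z.
  - now exists 0%nat.
Qed.

Lemma inT_add k a b : inT k a -> inT k b -> inT k (a + b).
Proof.
  destruct k; simpl; auto.
  - intros [z1 ->] [z2 ->]. exists (z1 + z2)%Z. now rewrite plus_IZR.
  - lra.
  - intros [n1 ->] [n2 ->]. exists (n1 + n2)%nat. now rewrite plus_INR.
Qed.

Section Metric.

Variables (X : Type) (rho : X -> X -> R).
Hypothesis Hmetric : is_metric rho.

Lemma rho_triangle4 x x' y' y : rho x y <= rho x x' + rho x' y' + rho y' y.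
Proof.
  destruct Hmetric as (_ & _ & _ & Htri).
  pose proof (Htri x x' y). pose proof (Htri x' y' y). lra.
Qed.

Lemma rho_eq_of_forall_lt x y : (forall eps, 0 < eps -> rho x y < eps) -> x = y.
Proof.
  destruct Hmetric as (Hpos & Hzero & _ & _).
  intros Hsmall. apply Hzero.
  destruct (Rle_lt_or_eq_dec 0 (rho x y) (Hpos x y)) as [Hlt | Heq]; auto.
  specialize (Hsmall _ Hlt). lra.
Qed.

End Metric.

Lemma convT_at {X : Type} k (rho : X -> X -> R) f g t :
  convT k rho f g -> inT k t ->
  forall eps, 0 < eps -> exists N, forall n, (N <= n)%nat -> rho (f n t) (g t) < eps.
Proof.
  intros Hconv Ht eps Heps.
  destruct (Hconv (Rabs t + 1) ltac:(pose proof (Rabs_pos t); lra) eps Heps) as [N HN].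
  exists N. intros n Hn. apply HN; auto. lra.
Qed.

Lemma strict_mono_ge (sigma : nat -> nat) :
  (forall n, (sigma n < sigma (S n))%nat) -> forall n, (n <= sigma n)%nat.
Proof. intros Hs n; induction n; [lia|]. specialize (Hs n); lia. Qed.

Lemma subseq_tends_to_infinity (h : nat -> R) (sigma : nat -> nat) :
  (forall n, INR n < h n) -> (forall n, (sigma n < sigma (S n))%nat) ->
  forall M, exists N, forall n, (N <= n)%nat -> M < h (sigma n).
Proof.
  intros Hh Hs M. destruct (INR_unbounded M) as [N HN]. exists N. intros n Hn.
  assert (INR N <= INR (sigma n)) by (apply le_INR; pose proof (strict_mono_ge _ Hs n); lia).
  specialize (Hh (sigma n)). lra.
Qed.

Lemma Lagrange_stable_omega_limit {X : Type} k (rho : X -> X -> R) phi (h : nat -> R) :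
  pos_Lagrange_stable k rho phi -> (forall n, inT k (h n) /\ INR n < h n) ->
  exists (sigma : nat -> nat) (psi : R -> X), omega_limit k rho phi psi /\
    convT k rho (fun n => shift phi (h (sigma n))) psi.
Proof.
  intros Hlag Hh.
  destruct (Hlag h) as (sigma & Hs & psi & Hpsi & Hconv).
  { intros n. destruct (Hh n) as [HT Hgt]. pose proof (pos_INR n). split; auto; lra. }
  exists sigma, psi. split; auto.
  split; auto. exists (fun n => h (sigma n)). repeat split; auto.
  - intros n. apply Hh.
  - apply subseq_tends_to_infinity; auto. intros n. apply Hh.
Qed.

Lemma not_S_asympt_periodic_seq {X : Type} k (rho : X -> X -> R) phi tau :
  ~ S_asympt_periodic k rho phi tau ->
  exists eps, 0 < eps /\ exists h : nat -> R, forall n,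
    inT k (h n) /\ INR n < h n /\ eps <= rho (phi (h n + tau)) (phi (h n)).
Proof.
  intros Hnot. apply NNPP. intros Hall. apply Hnot. intros eps Heps.
  apply NNPP. intros Hno_M. apply Hall. exists eps. split; auto.
  apply (choice (fun n t => inT k t /\ INR n < t /\ eps <= rho (phi (t + tau)) (phi t))).
  intros n. apply NNPP. intros Hno_t. apply Hno_M. exists (INR n).
  intros t Ht Hgt. apply Rnot_le_lt. intros Hle. apply Hno_t. eauto.
Qed.

Section OmegaLimit.

Variables (k : TimeAxis) (X : Type) (rho : X -> X -> R).
Hypothesis Hmetric : is_metric rho.
Variables (phi : R -> X) (tau : R).
Hypothesis Htau : inT k tau.

Lemma S_asympt_periodic_omega_periodic psi :
  S_asympt_periodic k rho phi tau -> omega_limit k rho phi psi -> periodicT k psi tau.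
Proof.
  intros HS (_ & h & HhT & Hh & Hconv) t Ht.
  apply (rho_eq_of_forall_lt _ _ Hmetric). intros eps Heps.
  destruct (convT_at _ _ _ _ (t + tau) Hconv (inT_add _ _ _ Ht Htau) (eps / 3))
    as [N1 HN1]; [lra|].
  destruct (convT_at _ _ _ _ t Hconv Ht (eps / 3)) as [N2 HN2]; [lra|].
  destruct (HS (eps / 3)) as [M HM]; [lra|].
  destruct (Hh (M - t)) as [N3 HN3].
  set (n := Nat.max N1 (Nat.max N2 N3)).
  specialize (HN1 n ltac:(lia)). specialize (HN2 n ltac:(lia)).
  specialize (HN3 n ltac:(lia)).
  specialize (HM (t + h n) (inT_add _ _ _ Ht (HhT n)) ltac:(lra)).
  unfold shift in HN1, HN2.
  replace (t + tau + h n) with (t + h n + tau) in HN1 by ring.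
  destruct Hmetric as (_ & _ & Hsym & _).
  rewrite Hsym in HN1.
  pose proof (rho_triangle4 _ _ Hmetric (psi (t + tau)) (phi (t + h n + tau))
                (phi (t + h n)) (psi t)).
  lra.
Qed.

Lemma omega_periodic_S_asympt_periodic :
  pos_Lagrange_stable k rho phi ->
  (forall psi, omega_limit k rho phi psi -> periodicT k psi tau) ->
  S_asympt_periodic k rho phi tau.
Proof.
  intros Hlag Hper. apply NNPP. intros Hnot.
  destruct (not_S_asympt_periodic_seq _ _ _ _ Hnot) as (eps & Heps & h & Hh).
  destruct (Lagrange_stable_omega_limit k rho phi h Hlag) as (sigma & psi & Hom & Hconv).
  { intros n. destruct (Hh n) as (? & ? & _). auto. }
  assert (Hpsi : psi tau = psi 0).
  { rewrite <- (Rplus_0_l tau) at 1. exact (Hper psi Hom 0 (inT_0 k)). }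
  destruct (convT_at _ _ _ _ tau Hconv Htau (eps / 2)) as [N1 HN1]; [lra|].
  destruct (convT_at _ _ _ _ 0 Hconv (inT_0 k) (eps / 2)) as [N2 HN2]; [lra|].
  set (n := Nat.max N1 N2).
  specialize (HN1 n ltac:(lia)). specialize (HN2 n ltac:(lia)).
  unfold shift in HN1, HN2. rewrite Rplus_0_l in HN2.
  rewrite Rplus_comm in HN1.
  destruct Hmetric as (_ & Hzero & Hsym & _).
  rewrite Hsym in HN2.
  pose proof (rho_triangle4 _ _ Hmetric (phi (h (sigma n) + tau)) (psi tau) (psi 0)
                (phi (h (sigma n)))).
  assert (rho (psi tau) (psi 0) = 0) by now apply Hzero.
  destruct (Hh (sigma n)) as (_ & _ & Hfar).
  lra.
Qed.

End OmegaLimit.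

Theorem mainTheorem13 (k : TimeAxis) (X : Type) (rho : X -> X -> R)
  (Hmetric : is_metric rho) (Hcomplete : metric_complete rho)
  (phi : R -> X) (Hphi : contT k rho phi)
  (Hlag : pos_Lagrange_stable k rho phi)
  (tau : R) (Htau : inT k tau) (Htau_pos : 0 < tau) :
  S_asympt_periodic k rho phi tau <->
  (forall psi : R -> X, omega_limit k rho phi psi -> periodicT k psi tau).
Proof.
  split.
  - intros HS psi. exact (S_asympt_periodic_omega_periodic k X rho Hmetric phi tau Htau psi HS).
  - exact (omega_periodic_S_asympt_periodic k X rho Hmetric phi tau Htau Hlag).
Qed.
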